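(* In the setting below, let $\mu=\alpha_1+\alpha_2+2\alpha_3+2\alpha_4+\alpha_5+\alpha_6$ and $\tau\mu=\alpha_1+\alpha_2+\alpha_3+2\alpha_4+2\alpha_5+\alpha_6$. Then $v=1\otimes e^{\mu}-1\otimes e^{\tau\mu}\in V^{\Lambda_0}$ is a highest weight vector of type $Vir(\tfrac45,\tfrac25)\otimes W^{\Omega_4}$, i.e. it satisfies (HW1)–(HW5) with $h=2/5$ and $\omega_j=\omega_4$.
   Context: Setting. $Q$ is the $E_6$ root lattice with simple roots $\alpha_1,\dots,\alpha_6$ (Dynkin chain $\alpha_1-\alpha_3-\alpha_4-\alpha_5-\alpha_6$, $\alpha_2$ attached to $\alpha_4$), form $\langle\cdot,\cdot\rangle$ from the Cartan matrix, fundamental weights $\lambda_i$, $P=\bigoplus\mathbb Z\lambda_i$, $\mathfrak h=\mathbb C\otimes P$. $\varepsilon:P\times P\to\{\pm1\}$ is bimultiplicative with $[\varepsilon(\lambda_i,\lambda_j)]$ rows $(1,1,1,1,1,1)$, $(-1,1,1,1,1,-1)$, $(-1,1,1,1,1,1)$, $(1,-1,1,1,1,1)$, $(1,1,1,1,1,-1)$, $(1,1,1,1,1,1)$. $V_P=S(\hat{\mathfrak h}^-)\otimes\mathbb C[P]$ with Heisenberg operators $h(n)$ ($[h(m),h'(n)]=m\langle h,h'\rangle\delta_{m+n,0}$, $h(n)1=0$ for $n>0$, $h(0)(u\otimes e^\beta)=\langle h,\beta\rangle u\otimes e^\beta$). For $\alpha\in Q$: $Y(1\otimes e^\alpha,z)=\exp(\sum_{k\ge1}\frac{\alpha(-k)}kz^k)\exp(-\sum_{k\ge1}\frac{\alpha(k)}kz^{-k})e_\alpha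 z^{\alpha(0)}=\sum_n\{1\otimes e^\alpha\}_nz^{-n-1}$, $e_\alpha(u\otimes e^\beta)=\varepsilon(\alpha,\beta)u\otimes e^{\alpha+\beta}$, $z^{\alpha(0)}(u\otimes e^\beta)=z^{\langle\alpha,\beta\rangle}u\otimes e^\beta$; $Y(h_1(-1)\cdots h_k(-1)\otimes e^\alpha,z)=\,:h_1(z)\cdots h_k(z)Y(1\otimes e^\alpha,z):$ with $h(z)=\sum_nh(n)z^{-n-1}$ (annihilators to the right). $V^{\Lambda_0}=S(\hat{\mathfrak h}^-)\otimes\mathbb C[Q]$. $\tau$: $\alpha_1\leftrightarrow\alpha_6$, $\alpha_3\leftrightarrow\alpha_5$; $\mathrm{Proj}(\nu)=(\nu+\tau\nu)/2$. $\theta=\alpha_1+2\alpha_2+2\alpha_3+3\alpha_4+2\alpha_5+\alpha_6$. Raising operators of $\tilde{\mathfrak a}$ (type $F_4^{(1)}$): $\{\beta_1\}_0=\{1\otimes e^{\alpha_2}\}_0$, $\{\beta_2\}_0=\{1\otimes e^{\alpha_4}\}_0$, $\{\beta_3\}_0=\{1\otimes e^{\alpha_3}\}_0+\{1\otimes e^{\alpha_5}\}_0$, $\{\beta_4\}_0=\{1\otimes e^{\alpha_1}\}_0+\{1\otimes e^{\alpha_6}\}_0$, and $\{1\otimes e^{-\theta}\}_1$. Coset conformal vector: $\omega=\frac1{10}[(-\lambda_1+\lambda_6)(-1)^2+(\lambda_3-\lambda_5)(-1)^2+(\lambda_1-\lambda_3+\lambda_5-\lambda_6)(-1)^2]\otimes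 e^0+\frac15(-1\otimes e^{\pm\gamma_1}-1\otimes e^{\pm\gamma_2}+1\otimes e^{\pm\gamma_3})$, $\gamma_1=\alpha_1-\alpha_6$, $\gamma_2=\alpha_3-\alpha_5$, $\gamma_3=\gamma_1+\gamma_2$, $1\otimes e^{\pm\gamma}:=1\otimes e^{\gamma}+1\otimes e^{-\gamma}$; $L(n)=\{\omega\}_{n+1}$ (Virasoro, central charge $4/5$, commuting with $\tilde{\mathfrak a}$). $\omega_4=\frac{\lambda_1+\lambda_6}2$; $\Omega_4$ is the level one $F_4^{(1)}$ weight with finite part $\omega_4$, $W^{\Omega_4}$ its irreducible module, $Vir(c,h)$ irreducible highest weight Virasoro modules. A nonzero $v\in V_P$ is a highest weight vector of type $Vir(\frac45,h)\otimes W^{\Omega_j}$ if (HW1) $\{1\otimes e^{-\theta}\}_1v=0$; (HW2) $\{\beta_i\}_0v=0$, $i=1,\dots,4$; (HW3) $L(1)v=L(2)v=0$; (HW4) $L(0)v=hv$; (HW5) $v\in\bigoplus_kS(\hat{\mathfrak h}^-)\otimes e^{\nu_k}$ with $\mathrm{Proj}(\nu_k)=\omega_j$. *)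

(* Lattice VOA V_P for the E6 weight lattice, modelled as the
   free algC-vector space (monoid algebra {malg algC[fkey]}) on the monomial
   basis  x^m (x) e^beta  of  S(h^-) (x) C[P]. *)
From HB Require Import structures.
From mathcomp Require Import all_boot all_order all_algebra all_field.
From mathcomp Require Import finmap.
From mathcomp.multinomials Require Import monalg.

Set Implicit Arguments.
Unset Strict Implicit.
Unset Printing Implicit Defensive.

Import Order.TTheory GRing.Theory Num.Theory.
Local Open Scope ring_scope.

(* Dynkin chain a1-a3-a4-a5-a6, a2 attached to a4 (0-indexed: 0-2-3-4-5, 1-3). *)
Definition e6_edge (i j : 'I_6) : bool :=
  ((i : nat), (j : nat)) \in [:: (0,2); (2,0); (2,3); (3,2); (3,4); (4,3);
                                 (4,5); (5,4); (1,3); (3,1)]%N.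

Definition cartan : 'M[int]_6 :=
  \matrix_(i, j) (if i == j then 2 else if e6_edge i j then -1 else 0).

(* Gram matrix of the fundamental weights: <lambda_i, lambda_j> = (A^-1)_ij. *)
Definition gramP : 'M[algC]_6 := invmx (map_mx intr cartan).

(* P = (+)_i Z lambda_i, elements given by their lambda-coordinates. *)
Definition lat := 'rV[int]_6.
(* h = C (x) P, elements given by their lambda-coordinates. *)
Definition hvec := 'rV[algC]_6.

Definition toh (b : lat) : hvec := map_mx intr b.
Definition form (x y : hvec) : algC := (x *m gramP *m y^T) 0 0.
Definition lam (j : 'I_6) : hvec := delta_mx 0 j.

(* the element of Q with alpha-coordinates c, in lambda-coordinates
   (alpha_i = sum_j A_ij lambda_j) *)
Definition rootQ (c : 'rV[int]_6) : lat := c *m cartan.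
Definition inQ (b : lat) : Prop := exists c : 'rV[int]_6, b = rootQ c.

Definition rowv (s : seq int) : 'rV[int]_6 := \row_(i < 6) nth 0 s i.

(* positions (0-indexed) where eps(lambda_i, lambda_j) = -1 *)
Definition eps_neg : seq (nat * nat) := [:: (1,0); (1,5); (2,0); (3,1); (4,5)]%N.

Definition eps (b c : lat) : algC :=
  (-1) ^ (\sum_(i < 6) \sum_(j < 6)
             (if ((i : nat), (j : nat)) \in eps_neg then b 0 i * c 0 j else 0)).

(* variable (j, k) stands for lambda_j(-(k+1)) *)
Definition fkey := ({cmonom ('I_6 * nat)%type} * lat)%type.
Definition VP := {malg algC[fkey]}.

Definition bas (m : {cmonom ('I_6 * nat)%type}) (b : lat) : VP := << (m, b) >>.
Definition vac (b : lat) : VP := bas (@onecm _) b.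

Definition lin (f : fkey -> VP) (v : VP) : VP :=
  \sum_(k <- msupp v) v@_k *: f k.

Definition wt (m : {cmonom ('I_6 * nat)%type}) : nat :=
  (\sum_(i <- finsupp m) m i * (i.2).+1)%N.

Definition heis_key (h : hvec) (n : int) (k : fkey) : VP :=
  let: (m, b) := k in
  match n with
  | Posz 0 => form h (toh b) *: bas m b
  | Posz n'.+1 =>
      \sum_(j < 6) ((n'.+1)%:R * form h (lam j) * (m (j, n'))%:R)
                     *: bas (divcm m (ucm (j, n'))) b
  | Negz n' => \sum_(j < 6) h 0 j *: bas (mulcm m (ucm (j, n'))) b
  end.
Definition heis (h : hvec) (n : int) : VP -> VP := lin (heis_key h n).

(* For commuting operators c_1, c_2, ..., the coefficient of x^a in
   exp(sum_{k>=1} c_k x^k) applied to v, i.e.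
   sum_{r<=a} 1/r! (sum_k c_k x^k)^r v  (higher r contribute nothing). *)
Definition Xmul (c : nat -> VP -> VP) (w : nat -> VP) : nat -> VP :=
  fun j => \sum_(1 <= k < j.+1) c k (w (j - k)%N).
Definition expcoef (c : nat -> VP -> VP) (a : nat) (v : VP) : VP :=
  \sum_(r < a.+1) (r`!%:R)^-1 *:
     iter r (Xmul c) (fun j => if j == 0%N then v else 0) a.

(* e_alpha z^{alpha(0)} on basis vectors (alpha given by alpha-coords c) *)
Definition Yexp_key (c : 'rV[int]_6) (n : int) (k : fkey) : VP :=
  let: (m, b) := k in
  let al := rootQ c in
  let p : int := (c *m b^T) 0 0 in                  (* <alpha, beta> *)
  let cminus := fun k u => (k%:R)^-1 *: heis (toh al) (- (k%:Z)) u in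
  let cplus := fun k u => - (k%:R)^-1 *: heis (toh al) (k%:Z) u in
  \sum_(bb < (wt m).+1)
     let a : int := - n - 1 - p + (bb%:Z) in
     if (0 <= a) then
       expcoef cminus `|a|%N (expcoef cplus bb (eps al b *: bas m (b + al)))
     else 0.
Definition Yexp (c : 'rV[int]_6) (n : int) : VP -> VP := lin (Yexp_key c n).

Definition nord (h : hvec) (j l : int) (u : VP) : VP :=
  if 0 < j then heis h l (heis h j u) else heis h j (heis h l u).
(* component {h(-1)^2 (x) e^0}_mm = sum_{j+l = mm-1} :h(j) h(l): ;
   on a basis vector only |j| <= wt + |mm| + 1 can contribute *)
Definition Yquad_key (h : hvec) (mm : int) (k : fkey) : VP :=
  let N := (wt k.1 + `|mm| + 1)%N in
  \sum_(t < (N + N).+1)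
     let j : int := (t%:Z) - (N%:Z) in nord h j (mm - 1 - j) (bas k.1 k.2).
Definition Yquad (h : hvec) (mm : int) : VP -> VP := lin (Yquad_key h mm).

(* ---------- coset Virasoro L(n) = {omega}_{n+1} ---------- *)
Definition hvr (s : seq algC) : hvec := \row_(i < 6) nth 0 s i.
Definition om_h1 : hvec := hvr [:: -1; 0; 0; 0; 0; 1].
Definition om_h2 : hvec := hvr [:: 0; 0; 1; 0; -1; 0].
Definition om_h3 : hvec := hvr [:: 1; 0; -1; 0; 1; -1].
Definition gam1 : 'rV[int]_6 := rowv [:: 1; 0; 0; 0; 0; -1].
Definition gam2 : 'rV[int]_6 := rowv [:: 0; 0; 1; 0; -1; 0].
Definition gam3 : 'rV[int]_6 := rowv [:: 1; 0; 1; 0; -1; -1].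

Definition Yexppm (c : 'rV[int]_6) (n : int) (v : VP) : VP :=
  Yexp c n v + Yexp (- c) n v.

Definition Lvir (n : int) (v : VP) : VP :=
  (10%:R)^-1 *: (Yquad om_h1 (n + 1) v + Yquad om_h2 (n + 1) v
                 + Yquad om_h3 (n + 1) v)
  + (5%:R)^-1 *: (- Yexppm gam1 (n + 1) v - Yexppm gam2 (n + 1) v
                  + Yexppm gam3 (n + 1) v).

Definition simple (i : 'I_6) : 'rV[int]_6 := delta_mx 0 i.
Definition a1 : 'I_6 := inord 0. Definition a2 : 'I_6 := inord 1.
Definition a3 : 'I_6 := inord 2. Definition a4 : 'I_6 := inord 3.
Definition a5 : 'I_6 := inord 4. Definition a6 : 'I_6 := inord 5.
Definition theta : 'rV[int]_6 := rowv [:: 1; 2; 2; 3; 2; 1].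

Definition tau_idx (i : 'I_6) : 'I_6 := inord (nth 0%N [:: 5; 1; 4; 3; 2; 0]%N i).
Definition tau_lat (b : lat) : lat := \row_i b 0 (tau_idx i).
Definition Proj (b : lat) : hvec := (2%:R)^-1 *: (toh b + toh (tau_lat b)).

Definition omega4 : hvec := hvr [:: 1/2; 0; 0; 0; 0; 1/2].

Definition hw_vector (hh : algC) (w : hvec) (v : VP) : Prop :=
  v <> 0 /\ [/\
      Yexp (- theta) 1 v = 0,
      [/\ Yexp (simple a2) 0 v = 0, Yexp (simple a4) 0 v = 0,
                    Yexp (simple a3) 0 v + Yexp (simple a5) 0 v = 0 &
                    Yexp (simple a1) 0 v + Yexp (simple a6) 0 v = 0],
      Lvir 1 v = 0 /\ Lvir 2 v = 0,
      Lvir 0 v = hh *: v &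
      forall k, k \in msupp v -> Proj k.2 = w].

(* V^{Lambda_0} = S(h^-) (x) C[Q] *)
Definition in_VQ (v : VP) : Prop := forall k, k \in msupp v -> inQ k.2.

Definition mu : 'rV[int]_6 := rowv [:: 1; 1; 2; 2; 1; 1].
Definition tau_mu : 'rV[int]_6 := rowv [:: 1; 1; 1; 2; 2; 1].

(* The vector e^mu - e^tau(mu) is a combination of two vacuum vectors, on which
   every operator involved acts by a closed formula: {e^alpha}_n e^beta vanishes
   for n >= -<alpha,beta> and equals eps(alpha,beta) e^(alpha+beta) for
   n = -<alpha,beta> - 1, while {h(-1)^2}_m acts by <h,beta>^2 for m = 1 and by 0
   for m >= 2.  Each condition thus reduces to finitely many pairings of roots.
   The raising operators kill both terms, except that e^alpha3 and e^alpha5 send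
   e^tau(mu) and e^mu to the same vector e^(mu+alpha5) = e^(tau(mu)+alpha3), and
   the two contributions cancel.  L(n), n > 0, kills both terms because all the
   pairings <gamma_i, beta> lie in [-2, 2].  In L(0) the quadratic part gives
   1/5, and the operators e^(-+gamma2), which swap e^mu and e^tau(mu), give
   another 1/5. *)

From HB Require Import structures.
From mathcomp Require Import all_boot all_order all_algebra all_field.
From mathcomp Require Import finmap.
From mathcomp.multinomials Require Import monalg.
From mathcomp Require Import ring zify.

Set Implicit Arguments.
Unset Strict Implicit.
Unset Printing Implicit Defensive.

Import Order.TTheory GRing.Theory Num.Theory.
Local Open Scope ring_scope.

(* A locked copy of [vac]: conversion must never compute with vacuum vectors,
   or comparing two operators applied to them becomes prohibitively slow. *)
HB.lock Definition vacuum (b : lat) : VP := vac b.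

Lemma vacuumE b : vacuum b = vac b.
Proof. by rewrite vacuum.unlock. Qed.

Section LinearExtension.

Variable f : fkey -> VP.

Lemma linEw (d : {fset fkey}) (v : VP) : (msupp v `<=` d)%fset ->
  lin f v = \sum_(k <- d) v@_k *: f k.
Proof.
move=> sub; rewrite /lin (big_fset_incl _ sub) // => k _ /mcoeff_outdom ->.
by rewrite scale0r.
Qed.

Lemma linD (x y : VP) : lin f (x + y) = lin f x + lin f y.
Proof.
rewrite (linEw (msuppD_le x y)) (linEw (fsubsetUl (msupp x) (msupp y))).
rewrite (linEw (fsubsetUr (msupp x) (msupp y))) -big_split /=.
by apply: eq_bigr => k _; rewrite mcoeffD scalerDl.
Qed.

Lemma linZ c (x : VP) : lin f (c *: x) = c *: lin f x.
Proof.
rewrite (linEw (msuppZ_le c x)) /lin scaler_sumr.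
by apply: eq_bigr => k _; rewrite mcoeffZ scalerA.
Qed.

Lemma lin0 : lin f 0 = 0.
Proof. by rewrite /lin msupp0 big_seq_fset0. Qed.

Lemma linB (x y : VP) : lin f (x - y) = lin f x - lin f y.
Proof. by rewrite linD -scaleN1r linZ scaleN1r. Qed.

Lemma lin_vacuum b : lin f (vacuum b) = f (@onecm _, b).
Proof.
by rewrite vacuumE /lin /vac /bas msuppU oner_eq0 big_seq_fset1 mcoeffUU scale1r.
Qed.

End LinearExtension.

Lemma mcoeff_vacuum (b : lat) k : (vacuum b)@_k = ((@onecm _, b) == k)%:R.
Proof. by rewrite vacuumE; exact: (@mcoeffU fkey algC). Qed.

Lemma mcoeff_vacB (b b' : lat) k :
  (vacuum b - vacuum b')@_k = ((@onecm _, b) == k)%:R - ((@onecm _, b') == k)%:R.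
Proof. by rewrite mcoeffB !mcoeff_vacuum. Qed.

Lemma msupp_vacB (b b' : lat) k :
  k \in msupp (vacuum b - vacuum b') -> k.2 = b \/ k.2 = b'.
Proof.
rewrite -mcoeff_neq0 mcoeff_vacB.
have [<-|ne] := eqVneq (@onecm _, b) k; first by left.
have [<-|ne'] := eqVneq (@onecm _, b') k; first by right.
by rewrite subrr eqxx.
Qed.

Lemma vacB_neq0 (b b' : lat) : b != b' -> vacuum b - vacuum b' <> 0.
Proof.
move=> neq /(congr1 (mcoeff (@onecm _, b))).
rewrite mcoeff_vacB mcoeff0 eqxx xpair_eqE eqxx /= [b' == b]eq_sym (negbTE neq).
by rewrite subr0 => /eqP; rewrite oner_eq0.
Qed.

Lemma wt_onecm : wt (@onecm _) = 0%N.
Proof. by rewrite /wt mdom1 big_seq_fset0. Qed.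

Section VacuumAction.

Variables (h : hvec) (b : lat).

Lemma heis_vac_gt0 (n : int) : 0 < n -> heis h n (vacuum b) = 0.
Proof.
case: n => [[|n]|n] //= _; rewrite /heis lin_vacuum /=.
by apply: big1 => j _; rewrite onecmE mulr0 scale0r.
Qed.

Lemma heis_vac0 : heis h 0 (vacuum b) = form h (toh b) *: vacuum b.
Proof. by rewrite /heis lin_vacuum vacuumE. Qed.

Lemma nord_vac (j l : int) : 0 <= j + l ->
  nord h j l (vacuum b) =
  if (j == 0) && (l == 0) then form h (toh b) ^+ 2 *: vacuum b else 0.
Proof.
move=> jl_ge0; rewrite /nord; case: (ltrP 0 j) => [j_gt0|j_le0].
  by rewrite heis_vac_gt0 // /heis lin0 (gt_eqF j_gt0).
case: (ltrP 0 l) => [l_gt0|l_le0].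
  by rewrite heis_vac_gt0 // /heis lin0 (gt_eqF l_gt0) andbF.
have -> : j = 0 by lia.
have -> : l = 0 by lia.
by rewrite heis_vac0 /heis linZ -/(heis h 0) heis_vac0 scalerA -expr2.
Qed.

Lemma Yquad_vac (m : int) : 1 <= m ->
  Yquad h m (vacuum b) = if m == 1 then form h (toh b) ^+ 2 *: vacuum b else 0.
Proof.
move=> m_ge1; rewrite /Yquad lin_vacuum /Yquad_key /= wt_onecm add0n.
rewrite -/(vac b) -vacuumE.
set N := (`|m|%N + 1)%N; set F := form h (toh b) ^+ 2 *: vacuum b.
rewrite (eq_bigr (fun t : 'I_(N + N).+1 =>
   if (t%:Z - N%:Z == 0) && (m - 1 - (t%:Z - N%:Z) == 0) then F else 0));
  last by move=> t _; rewrite nord_vac //; lia.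
case: eqP => [m1|m_neq1]; last first.
  by apply: big1 => t _; case: eqP => //= ?; case: eqP => // ?; lia.
have N_lt : (N < (N + N).+1)%N by lia.
rewrite (bigD1 (Ordinal N_lt)) //= big1 ?addr0.
  by rewrite subrr eqxx m1 subrr eqxx.
move=> t t_neqN; case: eqP => //= tN; case/eqP: t_neqN.
by apply: val_inj => /=; lia.
Qed.

End VacuumAction.

(* <alpha, beta> for alpha given by alpha-coordinates and beta by
   lambda-coordinates, as in [Yexp_key] *)
Definition pairing (c : 'rV[int]_6) (b : lat) : int := (c *m b^T) 0 0.

Section VertexOperatorOnVacuum.

Variables (c : 'rV[int]_6) (n : int) (b : lat).

Lemma Yexp_vac_eq0 : 0 <= n + pairing c b -> Yexp c n (vacuum b) = 0.
Proof.
move=> ge0; rewrite /Yexp lin_vacuum /Yexp_key wt_onecm big_ord1 /= addr0.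
by have -> : (0 <= - n - 1 - pairing c b) = false by apply/negbTE; lia.
Qed.

Lemma Yexp_vac_lowest : n + pairing c b = -1 ->
  Yexp c n (vacuum b) = eps (rootQ c) b *: vacuum (b + rootQ c).
Proof.
move=> eq; rewrite /Yexp lin_vacuum /Yexp_key wt_onecm big_ord1 /= addr0.
have -> : - n - 1 - pairing c b = 0 by lia.
by rewrite lexx /expcoef !big_ord1 /= invr1 !scale1r vacuumE.
Qed.

End VertexOperatorOnVacuum.

Lemma pairingN c b : pairing (- c) b = - pairing c b.
Proof. by rewrite /pairing mulNmx mxE. Qed.

Lemma subrACA (V : zmodType) (a b c d : V) : (a - b) + (c - d) = (a + c) - (b + d).
Proof. by rewrite addrACA opprD. Qed.

Lemma YexpB c n : {morph Yexp c n : x y / x - y}.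
Proof. exact: linB. Qed.

Lemma YquadB h m : {morph Yquad h m : x y / x - y}.
Proof. exact: linB. Qed.

Lemma YexppmB c m : {morph Yexppm c m : x y / x - y}.
Proof. by move=> x y; rewrite /Yexppm !YexpB subrACA. Qed.

Lemma lincomb_morphB (a a' : algC) (q1 q2 q3 e1 e2 e3 : VP -> VP) :
  {morph q1 : x y / x - y} -> {morph q2 : x y / x - y} ->
  {morph q3 : x y / x - y} -> {morph e1 : x y / x - y} ->
  {morph e2 : x y / x - y} -> {morph e3 : x y / x - y} ->
  {morph (fun v => a *: (q1 v + q2 v + q3 v) + a' *: (- e1 v - e2 v + e3 v)) :
     x y / x - y}.
Proof.
move=> q1B q2B q3B e1B e2B e3B x y /=.
rewrite q1B q2B q3B e1B e2B e3B (opprD (e1 x)) (opprD (e2 x)).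
by rewrite !subrACA !scalerBr subrACA.
Qed.

Lemma LvirB n : {morph Lvir n : x y / x - y}.
Proof.
exact: (lincomb_morphB _ _ (YquadB om_h1 _) (YquadB om_h2 _) (YquadB om_h3 _)
          (YexppmB gam1 _) (YexppmB gam2 _) (YexppmB gam3 _)).
Qed.

(* The modes n + 1 >= 2 are then above the lowest nonzero mode of every
   e^(+-gamma_i) on e^b. *)
Lemma Lvir_vac_gt0 (n : int) (b : lat) :
  (forall g, g \in [:: gam1; gam2; gam3] -> `|pairing g b| <= 2) ->
  0 < n -> Lvir n (vacuum b) = 0.
Proof.
move=> bounded n_gt0.
have Yeq0 g : g \in [:: gam1; gam2; gam3] -> Yexppm g (n + 1) (vacuum b) = 0.
  move=> /bounded; rewrite ler_norml => /andP[lo hi].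
  by rewrite /Yexppm !Yexp_vac_eq0 ?addr0 ?pairingN //; lia.
rewrite /Lvir !Yquad_vac; try lia.
have -> : (n + 1 == 1) = false by apply/negbTE; lia.
by rewrite !Yeq0 ?inE ?eqxx ?orbT // !(addr0, oppr0, subr0, scaler0).
Qed.

Lemma Lvir0_vac (b : lat) : Lvir 0 (vacuum b) =
  (10%:R)^-1 *: (form om_h1 (toh b) ^+ 2 *: vacuum b
                 + form om_h2 (toh b) ^+ 2 *: vacuum b
                 + form om_h3 (toh b) ^+ 2 *: vacuum b)
  + (5%:R)^-1 *: (- Yexppm gam1 1 (vacuum b) - Yexppm gam2 1 (vacuum b)
                  + Yexppm gam3 1 (vacuum b)).
Proof.
have le11 : (1 : int) <= 1 by [].
by rewrite /Lvir (add0r (1 : int)) !(Yquad_vac _ _ le11) eqxx.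
Qed.

Ltac ord6_cases i := case: i => -[|[|[|[|[|[|//]]]]]] ?.

Lemma cartan_sym : cartan^T = cartan.
Proof. by apply/matrixP => i j; rewrite !mxE; ord6_cases i; ord6_cases j. Qed.

(* 3 A^-1, which is integral since det A = 3 *)
Definition cartan_inv3 : 'M[int]_6 := \matrix_(i, j) nth 0 (nth [::]
  [:: [:: 4; 3;  5;  6;  4; 2]; [:: 3; 6;  6;  9;  6; 3];
      [:: 5; 6; 10; 12;  8; 4]; [:: 6; 9; 12; 18; 12; 6];
      [:: 4; 6;  8; 12; 10; 5]; [:: 2; 3;  4;  6;  5; 4]] i) j.

Lemma mul_cartan_inv3 : cartan *m cartan_inv3 = 3%:M.
Proof.
apply/matrixP => i j; ord6_cases i; ord6_cases j;
  by rewrite !(mxE, big_ord_recr, big_ord0) /=; vm_compute.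
Qed.

Lemma cartan_unitmx : map_mx (intr : int -> algC) cartan \in unitmx.
Proof.
have inv3 : map_mx intr cartan *m ((3%:R)^-1 *: map_mx intr cartan_inv3) = 1%:M
    :> 'M[algC]_6.
  rewrite -scalemxAr -map_mxM mul_cartan_inv3 map_scalar_mx scale_scalar_mx /=.
  by rewrite mulVf // pnatr_eq0.
by case: (mulmx1_unit inv3).
Qed.

(* <lambda_i, alpha_j> = delta_ij *)
Lemma form_rootQ (h : hvec) (c : 'rV[int]_6) :
  form h (toh (rootQ c)) = (h *m (map_mx intr c)^T) 0 0.
Proof.
rewrite /form /toh /rootQ map_mxM trmx_mul !map_trmx cartan_sym !mulmxA.
by rewrite -(mulmxA h) /gramP mulVmx ?cartan_unitmx // mulmx1.
Qed.

Lemma rootQD (c d : 'rV[int]_6) : rootQ (c + d) = rootQ c + rootQ d.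
Proof. exact: mulmxDl. Qed.

Lemma rootQN (c : 'rV[int]_6) : rootQ (- c) = - rootQ c.
Proof. exact: mulNmx. Qed.

Lemma signz_even (z : int) : ~~ odd `|z|%N -> (-1 : algC) ^ z = 1.
Proof.
case: z => n; first by rewrite -exprnP -signr_odd => /negbTE ->.
by rewrite NegzE -invr_expz -exprnP -signr_odd => /negbTE ->; rewrite invr1.
Qed.

Lemma Proj_omega4 (b : lat) : b + tau_lat b = rowv [:: 1; 0; 0; 0; 0; 1] ->
  Proj b = omega4.
Proof.
move=> sym; rewrite /Proj /toh -map_mxD sym.
apply/rowP => j; ord6_cases j;
  by rewrite !mxE /= ?rmorph1 ?rmorph0 ?mulr0 ?mulr1 ?div1r.
Qed.

Lemma inord6 k (lt6 : (k < 6)%N) : inord k = Ordinal lt6.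
Proof. by apply: val_inj; rewrite /= inordK. Qed.

Ltac int_compute :=
  rewrite /pairing /rootQ /tau_lat /tau_idx /a1 /a2 /a3 /a4 /a5 /a6
    !(mxE, big_ord_recr, big_ord0) /=
    ?(inord6 (isT : (0 < 6)%N)) ?(inord6 (isT : (1 < 6)%N))
    ?(inord6 (isT : (2 < 6)%N)) ?(inord6 (isT : (3 < 6)%N))
    ?(inord6 (isT : (4 < 6)%N)) ?(inord6 (isT : (5 < 6)%N));
  vm_compute; reflexivity.

Lemma rootQ_mu : rootQ mu = rowv [:: 0; 0; 1; 0; -1; 1].
Proof. by apply/rowP => j; ord6_cases j; int_compute. Qed.

Lemma rootQ_tau_mu : rootQ tau_mu = rowv [:: 1; 0; -1; 0; 1; 0].
Proof. by apply/rowP => j; ord6_cases j; int_compute. Qed.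

Ltac lattice_compute := rewrite ?rootQ_mu ?rootQ_tau_mu; int_compute.

Lemma rootQ_a3 : rootQ (simple a3) = rowv [:: -1; 0; 2; -1; 0; 0].
Proof. by apply/rowP => j; ord6_cases j; int_compute. Qed.

Lemma rootQ_a5 : rootQ (simple a5) = rowv [:: 0; 0; 0; -1; 2; -1].
Proof. by apply/rowP => j; ord6_cases j; int_compute. Qed.

Lemma rootQ_gam2 : rootQ gam2 = rowv [:: -1; 0; 2; 0; -2; 1].
Proof. by apply/rowP => j; ord6_cases j; int_compute. Qed.

Lemma mu_add_a5 : mu + simple a5 = tau_mu + simple a3.
Proof. by apply/rowP => j; ord6_cases j; int_compute. Qed.

Lemma tau_mu_add_gam2 : tau_mu + gam2 = mu.
Proof. by apply/rowP => j; ord6_cases j; int_compute. Qed.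

Lemma mu_sub_gam2 : mu - gam2 = tau_mu.
Proof. by rewrite -tau_mu_add_gam2 addrK. Qed.

Ltac eps_compute := rewrite /eps signz_even //; int_compute.

Lemma eps_a5_mu : eps (rootQ (simple a5)) (rootQ mu) = 1.
Proof. by rewrite rootQ_a5 rootQ_mu; eps_compute. Qed.

Lemma eps_a3_tau_mu : eps (rootQ (simple a3)) (rootQ tau_mu) = 1.
Proof. by rewrite rootQ_a3 rootQ_tau_mu; eps_compute. Qed.

Lemma eps_gam2_tau_mu : eps (rootQ gam2) (rootQ tau_mu) = 1.
Proof. by rewrite rootQ_gam2 rootQ_tau_mu; eps_compute. Qed.

Lemma eps_Ngam2_mu : eps (rootQ (- gam2)) (rootQ mu) = 1.
Proof. by rewrite rootQN rootQ_gam2 rootQ_mu; eps_compute. Qed.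

Definition hwv : VP := vacuum (rootQ mu) - vacuum (rootQ tau_mu).

Lemma rootQ_mu_neq_tau_mu : rootQ mu != rootQ tau_mu.
Proof.
by rewrite rootQ_mu rootQ_tau_mu; apply/eqP => /rowP /(_ ord0) /eqP; rewrite !mxE.
Qed.

Lemma Yexp_hwv_eq0 c n :
  0 <= n + pairing c (rootQ mu) -> 0 <= n + pairing c (rootQ tau_mu) ->
  Yexp c n hwv = 0.
Proof. by move=> ge0 ge0'; rewrite YexpB !Yexp_vac_eq0 // subrr. Qed.

Lemma Yexp_a3_add_a5_hwv : Yexp (simple a3) 0 hwv + Yexp (simple a5) 0 hwv = 0.
Proof.
rewrite !YexpB.
rewrite (Yexp_vac_eq0 (c := simple a3) (b := rootQ mu)); last by lattice_compute.
rewrite (Yexp_vac_lowest (c := simple a3) (b := rootQ tau_mu));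
  last by lattice_compute.
rewrite (Yexp_vac_lowest (c := simple a5) (b := rootQ mu)); last by lattice_compute.
rewrite (Yexp_vac_eq0 (c := simple a5) (b := rootQ tau_mu)); last by lattice_compute.
rewrite eps_a3_tau_mu eps_a5_mu -!rootQD mu_add_a5.
by rewrite sub0r subr0 addNr.
Qed.

Lemma gam_pairings_bounded b : b \in [:: rootQ mu; rootQ tau_mu] ->
  forall g, g \in [:: gam1; gam2; gam3] -> `|pairing g b| <= 2.
Proof.
rewrite !inE => /orP[] /eqP -> g; rewrite !inE => /or3P[] /eqP ->;
  lattice_compute.
Qed.

Lemma Lvir_hwv_gt0 n : 0 < n -> Lvir n hwv = 0.
Proof.
move=> n_gt0; rewrite LvirB !Lvir_vac_gt0 ?subrr //;
  by apply: gam_pairings_bounded; rewrite !inE eqxx ?orbT.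
Qed.

Lemma form_om_mu : [/\ form om_h1 (toh (rootQ mu)) = 0,
  form om_h2 (toh (rootQ mu)) = 1 & form om_h3 (toh (rootQ mu)) = -1].
Proof. by rewrite !form_rootQ !(mxE, big_ord_recr, big_ord0) /=; split; ring. Qed.

Lemma form_om_tau_mu : [/\ form om_h1 (toh (rootQ tau_mu)) = 0,
  form om_h2 (toh (rootQ tau_mu)) = -1 & form om_h3 (toh (rootQ tau_mu)) = 1].
Proof. by rewrite !form_rootQ !(mxE, big_ord_recr, big_ord0) /=; split; ring. Qed.

Lemma tenth_double (x : VP) : (10%:R)^-1 *: (x + x) = (5%:R)^-1 *: x.
Proof.
have -> : (10%:R)^-1 = (5%:R)^-1 / 2%:R :> algC.
  by rewrite -invfM -natrM.
rewrite -scalerA -mulr2n -scaler_nat [_^-1 *: (_ *: x)]scalerA.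
by rewrite mulVf ?scale1r // pnatr_eq0.
Qed.

Lemma Lvir0_mu : Lvir 0 (vacuum (rootQ mu)) = (5%:R)^-1 *: hwv.
Proof.
rewrite Lvir0_vac /Yexppm.
rewrite (Yexp_vac_lowest (c := - gam2) (b := rootQ mu)); last by lattice_compute.
rewrite !Yexp_vac_eq0; [|lattice_compute..].
have [-> -> ->] := form_om_mu.
rewrite eps_Ngam2_mu -rootQD mu_sub_gam2.
rewrite expr0n sqrrN expr1n scale0r !scale1r !add0r addr0 oppr0 sub0r.
by rewrite tenth_double -scalerDr.
Qed.

Lemma Lvir0_tau_mu : Lvir 0 (vacuum (rootQ tau_mu)) = - (5%:R)^-1 *: hwv.
Proof.
rewrite Lvir0_vac /Yexppm.
rewrite (Yexp_vac_lowest (c := gam2) (b := rootQ tau_mu)); last by lattice_compute.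
rewrite !Yexp_vac_eq0; [|lattice_compute..].
have [-> -> ->] := form_om_tau_mu.
rewrite eps_gam2_tau_mu -rootQD tau_mu_add_gam2.
rewrite expr0n sqrrN expr1n scale0r !scale1r !add0r addr0 oppr0 !addr0.
by rewrite sub0r tenth_double -scalerDr scaleNr -scalerN /hwv opprB.
Qed.

Lemma Lvir0_hwv : Lvir 0 hwv = (2%:R / 5%:R) *: hwv.
Proof.
have -> : 2%:R / 5%:R = (5%:R)^-1 + (5%:R)^-1 :> algC.
  by rewrite mulr_natl mulr2n.
by rewrite LvirB Lvir0_mu Lvir0_tau_mu scaleNr opprK scalerDl.
Qed.

Lemma Proj_hwv k : k \in msupp hwv -> Proj k.2 = omega4.
Proof.
by case/msupp_vacB => ->; apply: Proj_omega4;
  apply/rowP => j; ord6_cases j; lattice_compute.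
Qed.

Theorem lemma6p2 :
  let v := vac (rootQ mu) - vac (rootQ tau_mu) in
  in_VQ v /\ hw_vector (2%:R / 5%:R) omega4 v.
Proof.
move=> v; have -> : v = hwv by rewrite /v /hwv !vacuumE.
split.
  by move=> k /msupp_vacB [] ->; [exists mu | exists tau_mu].
split; first exact: vacB_neq0 rootQ_mu_neq_tau_mu.
split.
- by apply: Yexp_hwv_eq0; lattice_compute.
- split; [ by apply: Yexp_hwv_eq0; lattice_compute
         | by apply: Yexp_hwv_eq0; lattice_compute
         | exact: Yexp_a3_add_a5_hwv | ].
  by rewrite !Yexp_hwv_eq0 ?addr0 //; lattice_compute.
- by split; apply: Lvir_hwv_gt0.
- exact: Lvir0_hwv.
- exact: Proj_hwv.
Qed.
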